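(* If $G_1$ and $G_2$ are topological Abelian groups with property $\mathfrak{h}$, then $G_1\times G_2$ has property $\mathfrak{h}$. Consequently the class of topological Abelian groups with property $\mathfrak{h}$ is closed under finite products.
   Context: $\mathbb{T}$ is the circle group. A subgroup $N$ of a topological Abelian group $G$ is $h$-embedded in $G$ if every group homomorphism $N\to\mathbb{T}$ extends to a continuous homomorphism $G\to\mathbb{T}$. $G$ has property $\mathfrak{h}$ if every countable subgroup of $G$ is $h$-embedded in $G$. *)

From HB Require Import structures.
From mathcomp Require Import all_boot all_order all_algebra.
From mathcomp Require Import all_classical all_reals all_analysis.
Set Implicit Arguments. Unset Strict Implicit. Unset Printing Implicit Defensive.
Import Order.TTheory GRing.Theory Num.Theory.
Import numFieldTopology.Exports.
Local Open Scope classical_set_scope.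
Local Open Scope ring_scope.

(* The circle group T, realised as the unit circle {(a,b) | a^2+b^2 = 1}
   in R x R (product topology), with complex multiplication as group law. *)
Definition on_circle (R : realType) (z : R * R) : Prop :=
  z.1 ^+ 2 + z.2 ^+ 2 = 1.

Definition circ_mul (R : realType) (z w : R * R) : R * R :=
  (z.1 * w.1 - z.2 * w.2, z.1 * w.2 + z.2 * w.1).

Definition is_subgroup (G : zmodType) (N : set G) : Prop :=
  N 0 /\ (forall x y, N x -> N y -> N (x - y)).

Definition char_on (R : realType) (G : zmodType) (N : set G) (f : G -> R * R)
  : Prop :=
  (forall x, N x -> on_circle (f x)) /\
  (forall x y, N x -> N y -> f (x + y) = circ_mul (f x) (f y)).

Definition h_embedded (R : realType) (G : PreTopologicalZmodule.type)
  (N : set G) : Prop :=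
  forall f : G -> R * R, char_on N f ->
    exists chi : G -> R * R,
      [/\ continuous chi, char_on setT chi & forall x, N x -> chi x = f x].

Definition prop_h (R : realType) (G : PreTopologicalZmodule.type) : Prop :=
  forall N : set G, is_subgroup N -> countable N -> h_embedded R N.

Definition prodG (G1 G2 : topologicalZmodType) : Type := (G1 * G2)%type.
HB.instance Definition _ (G1 G2 : topologicalZmodType) :=
  GRing.Zmodule.on (prodG G1 G2).
HB.instance Definition _ (G1 G2 : topologicalZmodType) :=
  Topological.on (prodG G1 G2).

From mathcomp Require Import all_boot all_order all_algebra.
From mathcomp Require Import all_classical all_reals all_analysis.
From mathcomp Require Import ring.
Import Order.TTheory GRing.Theory Num.Theory.
Import numFieldTopology.Exports.
Local Open Scope classical_set_scope.
Local Open Scope ring_scope.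

(* Let N <= G1 x G2 be countable and f : N -> T a character.  The trace
   N2 := {b | (0, b) \in N} is a countable subgroup of G2, so f(0, .) extends
   to a continuous character chi2 of G2.  Then g := f * conj(chi2 o snd) is a
   character of N that is trivial on N2, hence factors through the projection
   N1 := fst(N), a countable subgroup of G1; extend the factored character to
   a continuous psi on G1.  The product (psi o fst) * (chi2 o snd) is a
   continuous character of G1 x G2 which agrees with f on N. *)

Section CircleGroup.
Context {R : realType}.
Implicit Types z w u v : R * R.

Definition circ_one : R * R := (1, 0).
Definition circ_conj z : R * R := (z.1, - z.2).

Lemma circ_mulC z w : circ_mul z w = circ_mul w z.
Proof. by case: z w => a b [c d]; rewrite /circ_mul /=; congr (_, _); ring. Qed.

Lemma circ_mulA z w u : circ_mul z (circ_mul w u) = circ_mul (circ_mul z w) u.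
Proof.
by case: z w u => a b [c d] [e f]; rewrite /circ_mul /=; congr (_, _); ring.
Qed.

Lemma circ_mul1 z : circ_mul z circ_one = z.
Proof. by case: z => a b; rewrite /circ_mul /=; congr (_, _); ring. Qed.

Lemma circ_mulACA z w u v :
  circ_mul (circ_mul z w) (circ_mul u v) = circ_mul (circ_mul z u) (circ_mul w v).
Proof. by rewrite -!circ_mulA (circ_mulA w) (circ_mulC w u) -circ_mulA. Qed.

Lemma circ_conjM z w :
  circ_conj (circ_mul z w) = circ_mul (circ_conj z) (circ_conj w).
Proof. by case: z w => a b [c d]; rewrite /circ_mul /circ_conj /=; congr (_, _); ring. Qed.

Lemma circ_mulV z : on_circle z -> circ_mul z (circ_conj z) = circ_one.
Proof.
case: z => a b; rewrite /on_circle /circ_mul /circ_conj /= => z1.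
by congr (_, _); [rewrite -z1; ring | ring].
Qed.

Lemma on_circle_mul z w :
  on_circle z -> on_circle w -> on_circle (circ_mul z w).
Proof.
case: z w => a b [c d]; rewrite /on_circle /circ_mul /= => z1 w1.
have -> : (a * c - b * d) ^+ 2 + (a * d + b * c) ^+ 2
          = (a ^+ 2 + b ^+ 2) * (c ^+ 2 + d ^+ 2) by ring.
by rewrite z1 w1 mulr1.
Qed.

Lemma on_circle_conj z : on_circle z -> on_circle (circ_conj z).
Proof. by case: z => a b; rewrite /on_circle /= sqrrN. Qed.

Lemma continuous_circ_mul (T : topologicalType) (p q : T -> R * R) :
  continuous p -> continuous q -> continuous (fun x => circ_mul (p x) (q x)).
Proof.
move=> cp cq x; rewrite /circ_mul.
have c1 (r : T -> R * R) : continuous r -> (r y).1 @[y --> x] --> (r x).1.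
  by move=> cr; apply: cvg_comp (cr x) cvg_fst.
have c2 (r : T -> R * R) : continuous r -> (r y).2 @[y --> x] --> (r x).2.
  by move=> cr; apply: cvg_comp (cr x) cvg_snd.
have re : ((p y).1 * (q y).1 - (p y).2 * (q y).2) @[y --> x]
          --> ((p x).1 * (q x).1 - (p x).2 * (q x).2).
  by apply: cvgB; apply: cvgM; [apply: c1 | apply: c1 | apply: c2 | apply: c2].
have im : ((p y).1 * (q y).2 + (p y).2 * (q y).1) @[y --> x]
          --> ((p x).1 * (q x).2 + (p x).2 * (q x).1).
  by apply: cvgD; apply: cvgM; [apply: c1 | apply: c2 | apply: c2 | apply: c1].
exact: cvg_pair re im.
Qed.

End CircleGroup.

Section Characters.
Context {R : realType} {G : zmodType}.
Implicit Types (N : set G) (f g : G -> R * R).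

Lemma subgroupD N x y : is_subgroup N -> N x -> N y -> N (x + y).
Proof.
move=> [N0 NB] Nx Ny; rewrite -[y]opprK.
by apply: (NB) => //; rewrite -sub0r; apply: NB.
Qed.

Lemma char_on_sub N M f : M `<=` N -> char_on N f -> char_on M f.
Proof. by move=> MN [f1 fD]; split=> [x /MN|x y /MN Nx /MN]; auto. Qed.

Lemma char_on_mul N f g :
  char_on N f -> char_on N g -> char_on N (fun x => circ_mul (f x) (g x)).
Proof.
move=> [f1 fD] [g1 gD]; split=> [x Nx|x y Nx Ny].
  by apply: on_circle_mul; [apply: f1 | apply: g1].
by rewrite fD // gD // circ_mulACA.
Qed.

Lemma char_on_conj N f : char_on N f -> char_on N (fun x => circ_conj (f x)).
Proof.
move=> [f1 fD]; split=> [x Nx|x y Nx Ny]; first by apply/on_circle_conj/f1.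
by rewrite fD // circ_conjM.
Qed.

Lemma char_on_comp {H : zmodType} (p : G -> H) (f : H -> R * R) :
  {morph p : x y / x + y} -> char_on setT f -> char_on setT (f \o p).
Proof.
move=> pD [f1 fD]; split=> [x _|x y _ _] /=; first exact: f1.
by rewrite pD; apply: fD.
Qed.

Lemma char_on_eq N f x y : is_subgroup N -> char_on N f -> N x -> N y ->
  f (x - y) = circ_one -> f x = f y.
Proof.
move=> [N0 NB] [f1 fD] Nx Ny fxy.
have Nxy : N (x - y) by apply: NB.
by rewrite -[x](subrK y) fD // fxy circ_mulC circ_mul1.
Qed.

Lemma subgroup_image {H : zmodType} (p : G -> H) N :
  {morph p : x y / x - y} -> is_subgroup N -> is_subgroup (p @` N).
Proof.
move=> pB [N0 NB]; split.
  by exists 0 => //; rewrite -(subrr 0) pB subrr.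
by move=> _ _ [x Nx <-] [y Ny <-]; exists (x - y); rewrite ?pB //; apply: NB.
Qed.

Lemma subgroup_preimage {H : zmodType} (p : H -> G) N :
  {morph p : x y / x - y} -> is_subgroup N -> is_subgroup (p @^-1` N).
Proof.
move=> pB [N0 NB]; split=> [|x y Nx Ny] /=; last by rewrite pB; apply: NB.
by rewrite -(subrr 0) pB subrr.
Qed.

Lemma char_on_factor {H : zmodType} (p : G -> H) N f :
  {morph p : x y / x + y} -> is_subgroup N -> char_on N f ->
  (forall x y, N x -> N y -> p x = p y -> f x = f y) ->
  exists h : H -> R * R, char_on (p @` N) h /\ forall x, N x -> h (p x) = f x.
Proof.
move=> pD Nsub [f1 fD] f_fib.
pose lift b := xget 0 (N `&` p @^-1` [set b]).
have liftP b : (p @` N) b -> N (lift b) /\ p (lift b) = b.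
  by case=> x Nx <-; apply: (xgetI 0 (P := N `&` _) (x := x)).
have hf x : N x -> f (lift (p x)) = f x.
  by move=> Nx; have [Nl pl] := liftP (p x) (ex_intro2 _ _ x Nx erefl); apply: f_fib.
exists (f \o lift); split=> [|x Nx]; last exact: hf.
split=> [b /liftP[]|_ _ [x Nx <-] [y Ny <-]] /=; first by auto.
by rewrite -pD hf ?fD ?hf //; apply: subgroupD.
Qed.

End Characters.

Section ProductGroup.
Context {G1 G2 : topologicalZmodType}.
Local Notation G := (prodG G1 G2).

Lemma prodG_fstD : {morph (fst : G -> G1) : x y / x + y}. Proof. by []. Qed.
Lemma prodG_fstB : {morph (fst : G -> G1) : x y / x - y}. Proof. by []. Qed.
Lemma prodG_sndD : {morph (snd : G -> G2) : x y / x + y}. Proof. by []. Qed.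

Definition prodG_inr (b : G2) : G := (0, b).

Lemma prodG_inrD : {morph prodG_inr : x y / x + y}.
Proof. by move=> x y; rewrite /prodG_inr; congr (_, _); rewrite /= addr0. Qed.

Lemma prodG_inrB : {morph prodG_inr : x y / x - y}.
Proof. by move=> x y; rewrite /prodG_inr; congr (_, _); rewrite /= subrr. Qed.

Lemma prodG_sub_fst (x y : G) : x.1 = y.1 -> x - y = prodG_inr (x.2 - y.2).
Proof.
by case: x y => a b [c d] /= <-; rewrite /prodG_inr; congr (_, _); rewrite /= subrr.
Qed.

Lemma countable_inr_preimage (N : set G) :
  countable N -> countable (prodG_inr @^-1` N).
Proof.
move=> cN; apply: sub_countable cN; apply: card_le_trans (card_image_le snd N).
by apply: subset_card_le => b Nb; exists (prodG_inr b).
Qed.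

Lemma continuous_circ_mul_fst_snd (R : realType) (psi : G1 -> R * R) (chi : G2 -> R * R) :
  continuous psi -> continuous chi ->
  continuous (fun x : G => circ_mul (psi x.1) (chi x.2)).
Proof.
move=> cpsi cchi; apply: continuous_circ_mul => x.
- exact: cvg_comp _ _ (@cvg_fst G1 G2 (nbhs x.1) (nbhs x.2) _) (cpsi x.1).
- exact: cvg_comp _ _ (@cvg_snd G1 G2 (nbhs x.1) (nbhs x.2) _) (cchi x.2).
Qed.

End ProductGroup.

Theorem proposition2p4 (R : realType) (G1 G2 : topologicalZmodType) :
  prop_h R G1 -> prop_h R G2 -> prop_h R (prodG G1 G2).
Proof.
move=> h1 h2 N Nsub cN f fN.
pose N2 := prodG_inr @^-1` N.
have fN2 : char_on N2 (f \o prodG_inr).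
  by case: fN => f1 fD; split=> [b|b c] /=; rewrite ?prodG_inrD; auto.
have [chi2 [cchi2 chi2_char chi2_ext]] :=
  h2 N2 (subgroup_preimage _ _ prodG_inrB Nsub)
     (countable_inr_preimage _ cN) _ fN2.
pose g x := circ_mul (f x) (circ_conj (chi2 x.2)).
have gN : char_on N g.
  apply: char_on_mul fN _; apply: char_on_conj.
  exact: char_on_sub (subsetT N) (char_on_comp _ _ prodG_sndD chi2_char).
have g_fib x y : N x -> N y -> x.1 = y.1 -> g x = g y.
  move=> Nx Ny xy; apply: (char_on_eq _ _ _ _ Nsub gN Nx Ny).
  have N2xy : N2 (x.2 - y.2) by rewrite /N2 /= -prodG_sub_fst //; apply: Nsub.2.
  rewrite /g prodG_sub_fst //= chi2_ext //; apply: circ_mulV.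
  by case: fN => f1 _; apply: f1.
have [h [hN h_ext]] := char_on_factor _ _ _ prodG_fstD Nsub gN g_fib.
have [psi [cpsi psi_char psi_ext]] :=
  h1 _ (subgroup_image _ _ prodG_fstB Nsub)
     (sub_countable (card_image_le _ _) cN) _ hN.
exists (fun x => circ_mul (psi x.1) (chi2 x.2)); split.
- exact: continuous_circ_mul_fst_snd.
- exact: char_on_mul (char_on_comp _ _ prodG_fstD psi_char)
                     (char_on_comp _ _ prodG_sndD chi2_char).
- move=> x Nx; rewrite psi_ext; last by exists x.
  rewrite h_ext // /g -circ_mulA (circ_mulC _ (chi2 _)) circ_mulV ?circ_mul1 //.
  by case: chi2_char => + _; apply.
Qed.
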